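(* Let $m,n$ be positive integers, and let $k,s$ be positive integers with $k<n$ and $s<m+n-k-1$. Then $$\sum_{t=s+1}^{m+n-k-1}(t-n+k+1)(t+2)(t+3)\cdots(t+k)\binom{\frac{mn}{n-k}+n-k-t-2}{\frac{mk}{n-k}-1} =\frac{m}{m+n-k}(s+2)(s+3)\cdots(s+k+1)\binom{\frac{mn}{n-k}+n-k-s-2}{\frac{mk}{n-k}}.$$
   Context: Binomial coefficients are generalized binomial coefficients: for real $a,b$, $\binom{a}{b}=\frac{\Gamma(a+1)}{\Gamma(b+1)\Gamma(a-b+1)}$, where $\Gamma$ is the Gamma function; in particular, if $b$ is a positive integer then $\binom{a}{b}=\frac{a(a-1)\cdots(a-b+1)}{b!}$. The product $(t+2)(t+3)\cdots(t+k)$ is the product of $t+j$ over $j=2,\ldots,k$ (empty product equal to $1$ when $k=1$). *)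

From Stdlib Require Import Reals.
From Coquelicot Require Import Coquelicot.
Open Scope R_scope.

(* Euler's Gamma function, Gamma z = int_0^oo x^(z-1) e^(-x) dx
   (the integral converges for z > 0, the only case used below). *)
Definition Gamma (z : R) : R :=
  RInt_gen (fun x => Rpower x (z - 1) * exp (- x))
           (at_right 0) (Rbar_locally p_infty).

Definition gbinom (a b : R) : R :=
  Gamma (a + 1) / (Gamma (b + 1) * Gamma (a - b + 1)).

Fixpoint shifted_prod (x : R) (k : nat) : R :=
  match k with
  | O => 1
  | S O => 1
  | S k' => shifted_prod x k' * (x + INR (S k'))
  end.

From Stdlib Require Import Reals Lra Lia Classical.
From Coquelicot Require Import Coquelicot.
Open Scope R_scope.

(* Everything rests on Gamma (z + 1) = z * Gamma z for z > 0.  The improper integral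
   defining Gamma exists because the integrand is nonnegative and its integrals over
   compact intervals are bounded (by x^(z-1) near 0 and by a multiple of x^(-2) near
   +oo); the recurrence is then integration by parts against x^z e^(-x), which vanishes
   at both ends.  The recurrence gives the absorption identities for gbinom, and with
   them each summand becomes a difference T (t - 1) - T t of explicit closed forms,
   with T vanishing at the upper end of the range, so the sum telescopes. *)

Lemma ball_R (x y e : R) : ball x e y <-> Rabs (y - x) < e.
Proof. reflexivity. Qed.

Lemma exp_le_compat u v : u <= v -> exp u <= exp v.
Proof.
  intros [Huv | <-]; [apply Rlt_le, exp_increasing, Huv | apply Rle_refl].
Qed.

Lemma Rpower_pred x p : 0 < x -> Rpower x (p - 1) = Rpower x p / x.
Proof.
  intros Hx. unfold Rminus, Rdiv. rewrite Rpower_plus, Rpower_Ropp, Rpower_1; trivial.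
Qed.

Lemma is_derive_Rpower x p : 0 < x ->
  is_derive (fun y => Rpower y p) x (p * Rpower x (p - 1)).
Proof. intros Hx. apply is_derive_Reals, derivable_pt_lim_power, Hx. Qed.

Lemma Rpower_mul_exp_le_Rpower x p : 0 <= x -> Rpower x p * exp (- x) <= Rpower x p.
Proof.
  intros Hx. rewrite <- (Rmult_1_r (Rpower x p)) at 2.
  apply Rmult_le_compat_l; [apply Rlt_le, exp_pos |].
  rewrite <- exp_0. apply exp_le_compat. lra.
Qed.

Lemma Rpower_mul_exp_le x p : 0 < x -> 0 < p ->
  Rpower x p * exp (- x) <= Rpower p p * exp (- p).
Proof.
  intros Hx Hp. unfold Rpower. rewrite <- !exp_plus. apply exp_le_compat.
  assert (Hln := exp_ineq1_le (ln (x / p))).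
  rewrite exp_ln, ln_div in Hln by (try apply Rdiv_lt_0_compat; assumption).
  apply Rmult_le_compat_l with (r := p) in Hln; [|lra].
  replace (p * (x / p)) with x in Hln by (field; lra). lra.
Qed.

Lemma RInt_le_antiderivative (f g G : R -> R) a b : a <= b -> ex_RInt f a b ->
  (forall x, a <= x <= b -> is_derive G x (g x)) ->
  (forall x, a <= x <= b -> continuous g x) ->
  (forall x, a < x < b -> f x <= g x) ->
  RInt f a b <= G b - G a.
Proof.
  intros Hab Hf HG Hg Hfg.
  assert (Hint : is_RInt g a b (G b - G a))
    by (apply (is_RInt_derive G g); rewrite Rmin_left, Rmax_right; auto).
  rewrite <- (is_RInt_unique g a b _ Hint).
  apply RInt_le; auto. exists (G b - G a). exact Hint.
Qed.

Section NonnegImproperIntegral.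

Variable f : R -> R.
Hypothesis f_ge0 : forall x, 0 < x -> 0 <= f x.
Hypothesis ex_RInt_f : forall a b, 0 < a -> 0 < b -> ex_RInt f a b.

Lemma RInt_widen a a' b' b : 0 < a <= a' -> a' <= b' -> b' <= b ->
  RInt f a' b' <= RInt f a b.
Proof.
  intros Ha Hab Hb.
  rewrite <- (RInt_Chasles f a a' b), <- (RInt_Chasles f a' b' b) by (apply ex_RInt_f; lra).
  assert (0 <= RInt f a a')
    by (apply RInt_ge_0; [lra | apply ex_RInt_f; lra | intros; apply f_ge0; lra]).
  assert (0 <= RInt f b' b)
    by (apply RInt_ge_0; [lra | apply ex_RInt_f; lra | intros; apply f_ge0; lra]).
  unfold plus; simpl. lra.
Qed.

(* The integral over (0, +oo) is the supremum of the integrals over the [a, b] containing 1. *)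
Lemma ex_RInt_gen_bounded (C : R) :
  (forall a b, 0 < a <= 1 -> 1 <= b -> RInt f a b <= C) ->
  ex_RInt_gen f (at_right 0) (Rbar_locally p_infty).
Proof.
  intros HC.
  set (E := fun y => exists a b, 0 < a <= 1 /\ 1 <= b /\ y = RInt f a b).
  destruct (completeness E) as [L [L_ub L_least]].
  { exists C. intros y (a & b & Ha & Hb & ->). auto. }
  { exists (RInt f 1 1), 1, 1. repeat split; lra. }
  exists L. intros P [eps HP].
  assert (Happrox : exists a0 b0, 0 < a0 <= 1 /\ 1 <= b0 /\ L - eps < RInt f a0 b0).
  { apply NNPP. intros Hno.
    assert (L <= L - eps) by (apply L_least; intros y (a & b & Ha & Hb & ->);
      apply Rnot_lt_le; intros Hlt; apply Hno; exists a, b; auto).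
    pose proof (cond_pos eps). lra. }
  destruct Happrox as (a0 & b0 & Ha0 & Hb0 & Hgt).
  apply Filter_prod with (Q := fun a => 0 < a < a0) (R := fun b => b0 < b).
  - exists (mkposreal a0 (proj1 Ha0)). intros y Hy Hy0.
    apply (proj1 (ball_R _ _ _)), Rabs_def2 in Hy. simpl in Hy. lra.
  - exists b0. auto.
  - intros a b Ha Hb. exists (RInt f a b). split.
    + apply (RInt_correct f a b), ex_RInt_f; lra.
    + apply HP, ball_R.
      assert (RInt f a0 b0 <= RInt f a b) by (apply RInt_widen; lra).
      assert (RInt f a b <= L) by (apply L_ub; exists a, b; repeat split; lra).
      apply Rabs_def1; lra.
Qed.

End NonnegImproperIntegral.

Definition Gamma_integrand (z x : R) : R := Rpower x (z - 1) * exp (- x).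

Lemma Gamma_integrand_ge0 z x : 0 <= Gamma_integrand z x.
Proof. apply Rmult_le_pos; apply Rlt_le, exp_pos. Qed.

Lemma continuous_Gamma_integrand z x : 0 < x -> continuous (Gamma_integrand z) x.
Proof.
  intros Hx. apply (@ex_derive_continuous R_AbsRing R_NormedModule).
  unfold Gamma_integrand, Rpower. auto_derive. lra.
Qed.

Lemma ex_RInt_Gamma_integrand z a b : 0 < a -> 0 < b -> ex_RInt (Gamma_integrand z) a b.
Proof.
  intros Ha Hb. apply (@ex_RInt_continuous R_CompleteNormedModule).
  intros x Hx. apply continuous_Gamma_integrand.
  assert (0 < Rmin a b) by (apply Rmin_glb_lt; lra). lra.
Qed.

Lemma eventually_on_interval (P : R -> Prop) : (forall x, 0 < x -> P x) ->
  filter_prod (at_right 0) (Rbar_locally p_infty)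
    (fun ab => forall x, Rmin (fst ab) (snd ab) <= x <= Rmax (fst ab) (snd ab) -> P x).
Proof.
  intros HP. apply Filter_prod with (Q := fun a => 0 < a) (R := fun b => 0 < b).
  - exists (mkposreal 1 Rlt_0_1). auto.
  - exists 0. auto.
  - intros a b Ha Hb x [Hx _]. apply HP.
    assert (0 < Rmin a b) by (apply Rmin_glb_lt; assumption). simpl in *. lra.
Qed.

Section GammaRecurrence.

Variable z : R.
Hypothesis z_pos : 0 < z.

(* The maximum of x^(z+1) e^(-x), attained at x = z + 1. *)
Let K := Rpower (z + 1) (z + 1) * exp (- (z + 1)).

Lemma Rpower_mul_exp_le_div x : 0 < x -> Rpower x z * exp (- x) <= K / x.
Proof.
  intros Hx. replace z with (z + 1 - 1) at 1 by ring. rewrite Rpower_pred by exact Hx.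
  unfold Rdiv. rewrite Rmult_assoc, (Rmult_comm (/ x)), <- Rmult_assoc.
  apply Rmult_le_compat_r; [apply Rlt_le, Rinv_0_lt_compat, Hx |].
  apply Rpower_mul_exp_le; lra.
Qed.

Lemma RInt_Gamma_integrand_le a b : 0 < a <= 1 -> 1 <= b ->
  RInt (Gamma_integrand z) a b <= / z + K.
Proof.
  intros Ha Hb.
  rewrite <- (RInt_Chasles _ a 1 b) by (apply ex_RInt_Gamma_integrand; lra).
  assert (Hleft : RInt (Gamma_integrand z) a 1 <= / z).
  { apply Rle_trans with (/ z * Rpower 1 z - / z * Rpower a z).
    - apply (RInt_le_antiderivative _ (fun x => Rpower x (z - 1)) (fun x => / z * Rpower x z));
        try lra; [apply ex_RInt_Gamma_integrand; lra | | |].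
      + intros x Hx. replace (Rpower x (z - 1)) with (/ z * (z * Rpower x (z - 1))) by (field; lra).
        apply is_derive_scal, is_derive_Rpower. lra.
      + intros x Hx. apply (@ex_derive_continuous R_AbsRing R_NormedModule).
        eexists. apply is_derive_Rpower. lra.
      + intros x Hx. apply Rpower_mul_exp_le_Rpower. lra.
    - unfold Rpower at 1. rewrite ln_1, Rmult_0_r, exp_0, Rmult_1_r.
      assert (0 < / z * Rpower a z)
        by (apply Rmult_lt_0_compat; [apply Rinv_0_lt_compat, z_pos | apply exp_pos]).
      lra. }
  assert (Hright : RInt (Gamma_integrand z) 1 b <= K).
  { apply Rle_trans with (- K / b - - K / 1).
    - apply (RInt_le_antiderivative _ (fun x => K / (x * x)) (fun x => - K / x));
        try lra; [apply ex_RInt_Gamma_integrand; lra | | |].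
      + intros x Hx. auto_derive; [lra | field; lra].
      + intros x Hx. apply (@ex_derive_continuous R_AbsRing R_NormedModule). auto_derive. nra.
      + intros x Hx. unfold Gamma_integrand. rewrite Rpower_pred by lra.
        replace (Rpower x z / x * exp (- x)) with (Rpower x z * exp (- x) / x) by (field; lra).
        replace (K / (x * x)) with (K / x / x) by (field; lra).
        apply Rmult_le_compat_r; [apply Rlt_le, Rinv_0_lt_compat; lra |].
        apply Rpower_mul_exp_le_div. lra.
    - assert (0 < K / b)
        by (apply Rdiv_lt_0_compat; [apply Rmult_lt_0_compat; apply exp_pos | lra]).
      replace (- K / b - - K / 1) with (K - K / b) by (field; lra). lra. }
  unfold plus; simpl. lra.
Qed.

Lemma is_RInt_gen_Gamma :
  is_RInt_gen (Gamma_integrand z) (at_right 0) (Rbar_locally p_infty) (Gamma z).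
Proof.
  apply (@RInt_gen_correct R_CompleteNormedModule _ _
    (Proper_StrongProper _ (at_right_proper_filter 0))
    (Proper_StrongProper _ (Rbar_locally_filter p_infty)) (Gamma_integrand z)).
  apply (ex_RInt_gen_bounded _ (fun x _ => Gamma_integrand_ge0 z x)
           (ex_RInt_Gamma_integrand z) (/ z + K)).
  apply RInt_Gamma_integrand_le.
Qed.

Lemma is_derive_Rpower_mul_exp x : 0 < x ->
  is_derive (fun y => Rpower y z * exp (- y)) x
    (z * Gamma_integrand z x - Gamma_integrand (z + 1) x).
Proof.
  intros Hx.
  assert (Hexp : is_derive (fun y => exp (- y)) x (- exp (- x)))
    by (auto_derive; [exact I | ring]).
  assert (H := is_derive_mult _ _ x _ _ (is_derive_Rpower x z Hx) Hexp Rmult_comm).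
  unfold Gamma_integrand. replace (z + 1 - 1) with z by ring.
  unfold plus, mult in H; simpl in H.
  replace (z * (Rpower x (z - 1) * exp (- x)) - Rpower x z * exp (- x))
    with (z * Rpower x (z - 1) * exp (- x) + Rpower x z * - exp (- x)) by ring.
  exact H.
Qed.

Lemma Rpower_mul_exp_lim_0 :
  filterlim (fun x => Rpower x z * exp (- x)) (at_right 0) (locally 0).
Proof.
  apply filterlim_locally. intros eps.
  exists (mkposreal (Rpower eps (/ z)) (exp_pos _)). intros x Hx Hx0.
  apply ball_R. apply (proj1 (ball_R _ _ _)) in Hx. simpl in Hx.
  rewrite Rminus_0_r, Rabs_pos_eq in Hx by lra.
  rewrite Rminus_0_r, Rabs_pos_eq by (apply Rmult_le_pos; apply Rlt_le, exp_pos).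
  apply Rle_lt_trans with (Rpower x z).
  - apply Rpower_mul_exp_le_Rpower. lra.
  - replace (pos eps) with (Rpower (Rpower eps (/ z)) z)
      by (rewrite Rpower_mult, Rinv_l, Rpower_1; [reflexivity | apply cond_pos | lra]).
    apply Rlt_Rpower_l; lra.
Qed.

Lemma Rpower_mul_exp_lim_infty :
  filterlim (fun x => Rpower x z * exp (- x)) (Rbar_locally p_infty) (locally 0).
Proof.
  apply filterlim_locally. intros eps.
  assert (HK : 0 < K) by (apply Rmult_lt_0_compat; apply exp_pos).
  exists (K / eps). intros x Hx. apply ball_R.
  assert (0 < K / eps) by (apply Rdiv_lt_0_compat; [exact HK | apply cond_pos]).
  rewrite Rminus_0_r, Rabs_pos_eq by (apply Rmult_le_pos; apply Rlt_le, exp_pos).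
  apply Rle_lt_trans with (K / x); [apply Rpower_mul_exp_le_div; lra |].
  apply Rlt_div_l; [lra |].
  apply Rlt_div_l in Hx; [| apply cond_pos]. lra.
Qed.

Lemma is_RInt_gen_Gamma_parts :
  is_RInt_gen (fun x => z * Gamma_integrand z x - Gamma_integrand (z + 1) x)
    (at_right 0) (Rbar_locally p_infty) 0.
Proof.
  set (G := fun y => Rpower y z * exp (- y)).
  assert (HD : forall x, 0 < x ->
            Derive G x = z * Gamma_integrand z x - Gamma_integrand (z + 1) x)
    by (intros x Hx; apply is_derive_unique, is_derive_Rpower_mul_exp, Hx).
  assert (HG : is_RInt_gen (Derive G) (at_right 0) (Rbar_locally p_infty) (0 - 0)).
  { apply is_RInt_gen_Derive.
    - apply eventually_on_interval. intros x Hx. eexists. apply is_derive_Rpower_mul_exp, Hx.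
    - apply eventually_on_interval. intros x Hx.
      apply (continuous_ext_loc _ (fun y => z * Gamma_integrand z y - Gamma_integrand (z + 1) y)).
      + apply (filter_imp (fun y => 0 < y)); [intros y Hy; symmetry; apply HD, Hy |].
        apply (open_gt 0 x Hx).
      + apply (continuous_minus (fun y => z * Gamma_integrand z y) (Gamma_integrand (z + 1))).
        * apply (continuous_scal_r z (Gamma_integrand z)), continuous_Gamma_integrand, Hx.
        * apply continuous_Gamma_integrand, Hx.
    - apply Rpower_mul_exp_lim_0.
    - apply Rpower_mul_exp_lim_infty. }
  rewrite Rminus_0_r in HG.
  refine (is_RInt_gen_ext (Derive G) _ 0 _ HG).
  refine (filter_imp _ _ _ (eventually_on_interval _ HD)).
  intros ab H x Hx. apply H. lra.
Qed.

End GammaRecurrence.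

Lemma Gamma_succ z : 0 < z -> Gamma (z + 1) = z * Gamma z.
Proof.
  intros Hz.
  assert (H := is_RInt_gen_minus _ _ _ _
    (is_RInt_gen_scal _ z _ (is_RInt_gen_Gamma z Hz)) (is_RInt_gen_Gamma_parts z Hz)).
  apply (is_RInt_gen_ext _ (Gamma_integrand (z + 1))) in H.
  2:{ apply filter_forall. intros ab x _.
       unfold minus, plus, opp, scal; simpl; unfold mult; simpl. ring. }
  change (RInt_gen (Gamma_integrand (z + 1)) (at_right 0) (Rbar_locally p_infty) = z * Gamma z).
  rewrite (@is_RInt_gen_unique R_CompleteNormedModule _ _
    (Proper_StrongProper _ (at_right_proper_filter 0))
    (Proper_StrongProper _ (Rbar_locally_filter p_infty)) _ _ H).
  unfold minus, plus, opp, scal; simpl; unfold mult; simpl. ring.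
Qed.

Lemma mul_gbinom_left a b : 0 < b -> 0 < a - b + 1 ->
  b * gbinom a b = (a - b + 1) * gbinom a (b - 1).
Proof.
  intros Hb Hab. unfold gbinom.
  replace (b - 1 + 1) with b by ring. replace (a - (b - 1) + 1) with (a - b + 1 + 1) by ring.
  rewrite (Gamma_succ b), (Gamma_succ (a - b + 1)) by assumption.
  destruct (Req_dec (Gamma b) 0) as [Hg | Hg];
    [unfold Rdiv; rewrite !Rinv_mult, Hg, Rinv_0; ring |].
  destruct (Req_dec (Gamma (a - b + 1)) 0) as [Hh | Hh];
    [unfold Rdiv; rewrite !Rinv_mult, Hh, Rinv_0; ring |].
  field. repeat split; lra.
Qed.

Lemma mul_gbinom_down a b : 0 < a -> 0 < a - b ->
  (a - b) * gbinom a b = a * gbinom (a - 1) b.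
Proof.
  intros Ha Hab. unfold gbinom.
  replace (a - 1 + 1) with a by ring. replace (a - 1 - b + 1) with (a - b) by ring.
  rewrite (Gamma_succ a), (Gamma_succ (a - b)) by assumption.
  destruct (Req_dec (Gamma (b + 1)) 0) as [Hg | Hg];
    [unfold Rdiv; rewrite !Rinv_mult, Hg, Rinv_0; ring |].
  destruct (Req_dec (Gamma (a - b)) 0) as [Hh | Hh];
    [unfold Rdiv; rewrite !Rinv_mult, Hh, Rinv_0; ring |].
  field. repeat split; lra.
Qed.

Lemma shifted_prod_succ x k : (0 < k)%nat ->
  shifted_prod x (S k) = shifted_prod x k * (x + INR k + 1).
Proof.
  intros Hk. destruct k as [| k]; [lia |].
  change (shifted_prod x (S (S k))) with (shifted_prod x (S k) * (x + INR (S (S k)))).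
  rewrite (S_INR (S k)). ring.
Qed.

Lemma shifted_prod_shift x k : (0 < k)%nat ->
  shifted_prod x (S k) = (x + 2) * shifted_prod (x + 1) k.
Proof.
  intros Hk. induction k as [| k IH]; [lia |].
  destruct k as [| k]; [simpl; ring |].
  rewrite (shifted_prod_succ x (S (S k))), IH, (shifted_prod_succ (x + 1) (S k)) by lia.
  rewrite S_INR. ring.
Qed.

Lemma sum_n_m_telescope (u : nat -> R) (p q : nat) : (p <= q)%nat ->
  sum_n_m (fun i => u i - u (S i)) p q = u p - u (S q).
Proof.
  intros Hpq. induction Hpq as [| q Hpq IH].
  - rewrite sum_n_n. reflexivity.
  - rewrite sum_n_Sm by (apply le_S, Hpq). rewrite IH. unfold plus; simpl. ring.
Qed.

Section Telescoping.

Variables (m N b : R) (k : nat).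
Hypothesis m_pos : 0 < m.
Hypothesis N_pos : 0 < N.
Hypothesis k_pos : (0 < k)%nat.
Hypothesis b_def : b = m * INR k / N.

Definition summand (t : R) : R :=
  (t - N + 1) * shifted_prod t k * gbinom (b + m + N - t - 2) (b - 1).

(* Closed form of the sum of the summands at t > x.  It is written with gbinom _ (b - 1)
   rather than gbinom _ b (compare tail_eq) so that it stays meaningful, and vanishes, at
   x = m + N - 1, where gbinom _ b would involve the junk value Gamma 0. *)
Definition tail (x : R) : R :=
  m / (m + N) * shifted_prod x (S k) * ((m + N - 1 - x) / b)
  * gbinom (b + m + N - x - 2) (b - 1).

Lemma b_pos : 0 < b.
Proof.
  rewrite b_def. apply Rdiv_lt_0_compat; [apply Rmult_lt_0_compat | exact N_pos]; auto.
  apply lt_0_INR, k_pos.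
Qed.

Lemma tail_eq x : x + 2 <= m + N ->
  tail x = m / (m + N) * shifted_prod x (S k) * gbinom (b + m + N - x - 2) b.
Proof.
  intros Hx. pose proof b_pos as Hb.
  assert (H := mul_gbinom_left (b + m + N - x - 2) b ltac:(lra) ltac:(lra)).
  replace (b + m + N - x - 2 - b + 1) with (m + N - 1 - x) in H by ring.
  unfold tail.
  transitivity (m / (m + N) * shifted_prod x (S k) / b
                * ((m + N - 1 - x) * gbinom (b + m + N - x - 2) (b - 1))); [field; lra |].
  rewrite <- H. field. lra.
Qed.

Lemma tail_end : tail (m + N - 1) = 0.
Proof. unfold tail. replace (m + N - 1 - (m + N - 1)) with 0 by ring. unfold Rdiv. ring. Qed.

Lemma summand_telescopes x : x + 2 <= m + N ->
  summand (x + 1) = tail x - tail (x + 1).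
Proof.
  intros Hx. pose proof b_pos as Hb.
  assert (H := mul_gbinom_down (b + m + N - x - 2) (b - 1) ltac:(lra) ltac:(lra)).
  replace (b + m + N - x - 2 - (b - 1)) with (m + N - 1 - x) in H by ring.
  replace (b + m + N - x - 2 - 1) with (b + m + N - (x + 1) - 2) in H by ring.
  unfold summand, tail.
  rewrite (shifted_prod_shift x), (shifted_prod_succ (x + 1)) by exact k_pos.
  set (S1 := shifted_prod (x + 1) k).
  set (P0 := gbinom (b + m + N - x - 2) (b - 1)) in *.
  set (P1 := gbinom (b + m + N - (x + 1) - 2) (b - 1)) in *.
  transitivity (m / (m + N) * (x + 2) * S1 / b * ((m + N - 1 - x) * P0)
     - m / (m + N) * (S1 * (x + 1 + INR k + 1)) * ((m + N - 1 - (x + 1)) / b) * P1);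
    [| field; lra].
  assert (0 < INR k) by (apply lt_0_INR, k_pos).
  rewrite H, b_def. field. repeat split; lra.
Qed.

Lemma sum_summand (s L : nat) : (s <= L)%nat -> INR L + 2 = m + N ->
  sum_n_m (fun t => summand (INR t)) (S s) (S L)
  = m / (m + N) * shifted_prod (INR s) (S k) * gbinom (b + m + N - INR s - 2) b.
Proof.
  intros HsL HL.
  rewrite <- sum_n_m_S.
  rewrite (sum_n_m_ext_loc _ (fun i => tail (INR i) - tail (INR (S i)))).
  2:{ intros i [_ Hi]. apply le_INR in Hi. rewrite !S_INR. apply summand_telescopes. lra. }
  rewrite sum_n_m_telescope by exact HsL.
  replace (INR (S L)) with (m + N - 1) by (rewrite S_INR; lra).
  rewrite tail_end, Rminus_0_r. apply tail_eq.
  apply le_INR in HsL. lra.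
Qed.

End Telescoping.

Theorem lemma2p4 (m n k s : nat) :
  (0 < m)%nat -> (0 < n)%nat -> (0 < k)%nat -> (0 < s)%nat ->
  (k < n)%nat -> (s < m + n - k - 1)%nat ->
  sum_n_m (fun t : nat =>
      (INR t - INR n + INR k + 1) * shifted_prod (INR t) k *
      gbinom (INR m * INR n / (INR n - INR k) + INR n - INR k - INR t - 2)
             (INR m * INR k / (INR n - INR k) - 1))
    (s + 1) (m + n - k - 1)
  = INR m / (INR m + INR n - INR k) * shifted_prod (INR s) (k + 1) *
    gbinom (INR m * INR n / (INR n - INR k) + INR n - INR k - INR s - 2)
           (INR m * INR k / (INR n - INR k)).
Proof.
  intros Hm _ Hk _ Hkn Hsm.
  set (L := (m + n - k - 2)%nat).
  assert (HN : 0 < INR n - INR k) by (apply lt_INR in Hkn; lra).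
  assert (HL : INR L + 2 = INR m + (INR n - INR k)).
  { assert (E : (L + 2 + k = m + n)%nat) by (unfold L; lia).
    apply (f_equal INR) in E. rewrite !plus_INR in E. simpl in E. lra. }
  replace (s + 1)%nat with (S s) by lia.
  replace (m + n - k - 1)%nat with (S L) by (unfold L; lia).
  rewrite Nat.add_1_r.
  rewrite (sum_n_m_ext _ (fun t =>
    summand (INR m) (INR n - INR k) (INR m * INR k / (INR n - INR k)) k (INR t))).
  2:{ intros t. unfold summand. f_equal; [f_equal; ring | f_equal; field; lra]. }
  rewrite sum_summand by (auto using lt_0_INR; lia).
  f_equal; [f_equal; f_equal; ring | f_equal; field; lra].
Qed.
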